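(* Consider the eigenvalue problem $-u^{(6)}(x)=\lambda u(x)$ on $[0,1]$ with $u(0)=u'(0)=u''(0)=0$, $u(1)=u'(1)=u''(1)=0$. Its eigenvalues, in increasing order, are $\{\lambda_{n,3}\}_{n=2}^\infty=\{\mu_{n,3}^6\}_{n=2}^\infty$, where $\mu_{n,3}=n\pi$ if $n$ is even, and $\mu_{3,3}<\mu_{5,3}<\mu_{7,3}<\cdots$ are the positive solutions $\mu$ of the equation $$\cos\frac{\mu}{2}=\frac{4\cosh\frac{\mu\sqrt3}{2}}{\cosh(\mu\sqrt3)}+\frac{1}{\cosh(\mu\sqrt3)}\Big[\cos\frac{\mu}{2}\cos\mu-4\cos\frac{\mu}{2}\Big].$$ *)

From Stdlib Require Import Reals Lra.
From Coquelicot Require Import Coquelicot.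
Open Scope R_scope.

(* u is an eigenfunction of  -u^(6) = lam u  on [0,1] with
   u(0)=u'(0)=u''(0)=0 = u(1)=u'(1)=u''(1).
   u is taken 6 times differentiable on R (every solution of the ODE on [0,1]
   is a combination of exponentials, hence extends), the ODE holds on [0,1],
   and u is not identically zero on [0,1]. *)
Definition is_eigenfunction6 (lam : R) (u : R -> R) : Prop :=
  (forall k x, (k <= 6)%nat -> ex_derive_n u k x) /\
  (forall x, 0 <= x <= 1 -> - Derive_n u 6 x = lam * u x) /\
  (forall k, (k <= 2)%nat -> Derive_n u k 0 = 0 /\ Derive_n u k 1 = 0) /\
  (exists x, 0 <= x <= 1 /\ u x <> 0).

Definition is_eigenvalue6 (lam : R) : Prop :=
  exists u : R -> R, is_eigenfunction6 lam u.

Definition odd_eq (mu : R) : Prop :=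
  cos (mu / 2) =
    4 * cosh (mu * sqrt 3 / 2) / cosh (mu * sqrt 3)
    + / cosh (mu * sqrt 3) * (cos (mu / 2) * cos mu - 4 * cos (mu / 2)).

(* Eigenvalues are positive: the Lagrange identity
   [(u^(5) u - u^(4) u' + u''' u'')' = u^(6) u + (u''')^2] vanishes at both ends.
   Write [lam = m^6] and [t = m (x - 1/2)]. By an energy estimate every solution of the
   equation is a combination of the exponentials [e^(w t)], [w^6 = -1], and the symmetry
   [t -> -t] splits the six boundary conditions at [t = -+ m/2] into three for the even part
   and three for the odd part. The two 3x3 determinants are, up to nonvanishing factors,
   [sin(m/2)] and [cos(m/2)^2 + cosh(sqrt 3 m/2) cos(m/2) - 2], and the latter vanishing is
   the transcendental equation of the statement. This function is negative on [(0, pi)] and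
   wherever [cos(m/2) <= 0]; it increases from [-2] to a positive value on each
   [[(4i+3) pi, (4i+4) pi]] and returns to [-2] on [[(4i+4) pi, (4i+5) pi]], crossing zero
   once there since [cos(m/2)] is already small at a root. Hence its roots interlace with
   the even multiples of [pi]. *)

From Stdlib Require Import Reals Lra Lia Nsatz ZArith Classical.
From Coquelicot Require Import Coquelicot.
Open Scope R_scope.

Lemma is_derive_eq (f : R -> R) (x l l' : R) : is_derive f x l -> l = l' -> is_derive f x l'.
Proof. now intros H ->. Qed.

Lemma is_derive_plus' (f g : R -> R) (x a b : R) : is_derive f x a -> is_derive g x b ->
  is_derive (fun y => f y + g y) x (a + b).
Proof. apply (is_derive_plus f g). Qed.

Lemma is_derive_mult' (f g : R -> R) (x a b : R) : is_derive f x a -> is_derive g x b ->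
  is_derive (fun y => f y * g y) x (a * g x + f x * b).
Proof. intros Hf Hg. apply (is_derive_mult f g); auto. intros; apply Rmult_comm. Qed.

Lemma Derive_n_family (f : R -> R) (F : nat -> R -> R) :
  (forall x, f x = F O x) -> (forall k x, is_derive (F k) x (F (S k) x)) ->
  forall k x, Derive_n f k x = F k x /\ ex_derive_n f k x.
Proof.
  intros Hf HF k. induction k as [|k IH]; intros x.
  - split; [apply Hf|exact I].
  - split.
    + simpl. rewrite (Derive_ext _ (F k)) by (intros; apply IH).
      apply is_derive_unique, HF.
    + simpl. apply ex_derive_ext with (F k); [intros; symmetry; apply IH|].
      eexists; apply HF.
Qed.

Lemma Derive_n_is_derive (f : R -> R) (k : nat) (x : R) : ex_derive_n f (S k) x ->
  is_derive (Derive_n f k) x (Derive_n f (S k) x).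
Proof. intros H. now apply Derive_correct. Qed.

Lemma mvt_is_derive (f df : R -> R) (a b : R) : a < b ->
  (forall x, a <= x <= b -> is_derive f x (df x)) ->
  exists c, a < c < b /\ f b - f a = df c * (b - a).
Proof.
  intros Hab Hd. destruct (MVT_cor2 f df a b Hab) as [c [Hc1 Hc2]].
  - intros c Hc. apply is_derive_Reals. now apply Hd.
  - exists c; split; auto.
Qed.

Lemma is_derive_nondecreasing (f df : R -> R) (a b : R) :
  (forall x, a <= x <= b -> is_derive f x (df x)) ->
  (forall x, a <= x <= b -> 0 <= df x) ->
  forall x y, a <= x -> x <= y -> y <= b -> f x <= f y.
Proof.
  intros Hd Hp x y Hx Hxy Hy. destruct (Rle_lt_or_eq_dec _ _ Hxy) as [Hl| ->]; [|lra].
  destruct (mvt_is_derive f df x y Hl) as [c [Hc E]].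
  - intros z Hz. apply Hd. lra.
  - assert (0 <= df c) by (apply Hp; lra). nra.
Qed.

Lemma is_derive_nonincreasing (f df : R -> R) (a b : R) :
  (forall x, a <= x <= b -> is_derive f x (df x)) ->
  (forall x, a <= x <= b -> df x <= 0) ->
  forall x y, a <= x -> x <= y -> y <= b -> f y <= f x.
Proof.
  intros Hd Hn x y Hx Hxy Hy.
  enough (- f x <= - f y) by lra.
  apply (is_derive_nondecreasing (fun z => - f z) (fun z => - df z) a b); auto.
  - intros z Hz. apply (is_derive_opp f), Hd, Hz.
  - intros z Hz. specialize (Hn z Hz). lra.
Qed.

Lemma is_derive_pos_from_0 (f df : R -> R) (b : R) :
  (forall x, is_derive f x (df x)) -> f 0 = 0 ->
  (forall x, 0 < x <= b -> 0 < df x) -> forall x, 0 < x <= b -> 0 < f x.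
Proof.
  intros Hd H0 Hp x Hx. destruct (mvt_is_derive f df 0 x ltac:(lra)) as [c [Hc E]].
  - intros; apply Hd.
  - assert (0 < df c) by (apply Hp; lra). rewrite H0 in E. nra.
Qed.

Lemma is_derive_nonneg_from_0 (f df : R -> R) :
  (forall x, 0 <= x -> is_derive f x (df x)) -> (forall x, 0 <= x -> 0 <= df x) ->
  f 0 = 0 -> forall x, 0 <= x -> 0 <= f x.
Proof.
  intros Hd Hp H0 x Hx. rewrite <- H0.
  apply (is_derive_nondecreasing f df 0 x); try lra.
  - intros; apply Hd; lra.
  - intros; apply Hp; lra.
Qed.

Lemma is_derive_zero_from_0 (f df : R -> R) :
  (forall x, 0 <= x <= 1 -> is_derive f x (df x)) ->
  (forall x, 0 < x < 1 -> df x = 0) -> f 0 = 0 ->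
  forall x, 0 <= x <= 1 -> f x = 0.
Proof.
  intros Hd H0 Hf x Hx. destruct (Rle_lt_or_eq_dec 0 x ltac:(lra)) as [Hl| <-]; auto.
  destruct (mvt_is_derive f df 0 x Hl) as [c [Hc E]].
  - intros z Hz; apply Hd; lra.
  - rewrite H0 in E by lra. lra.
Qed.

Lemma Derive_n_locally_zero (f : R -> R) (x a b : R) (k : nat) : a < x < b ->
  (forall y, a < y < b -> f y = 0) -> Derive_n f k x = 0.
Proof.
  intros Hx Hf. rewrite (Derive_n_ext_loc _ (fun _ => 0)).
  - destruct k; [reflexivity|apply Derive_n_const].
  - apply (locally_interval _ x a b); try apply Hx.
    intros y Hy1 Hy2. now rewrite Hf.
Qed.

Lemma sqrt3_sq : sqrt 3 * sqrt 3 = 3.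
Proof. apply sqrt_sqrt; lra. Qed.

Lemma sqrt3_pos : 0 < sqrt 3.
Proof. apply sqrt_lt_R0; lra. Qed.

Lemma sqrt3_bounds : 1.732 < sqrt 3 < 1.7321.
Proof. pose proof sqrt3_sq. pose proof sqrt3_pos. split; nra. Qed.

Lemma exp_le_exp_le (x y : R) : x <= y -> exp x <= exp y.
Proof.
  intros H. destruct (Rle_lt_or_eq_dec _ _ H) as [Hlt| ->]; [|lra].
  left; now apply exp_increasing.
Qed.

Lemma cosh_gt_1 (x : R) : x <> 0 -> 1 < cosh x.
Proof.
  intros Hx. unfold cosh.
  pose proof (exp_ineq1 x Hx). pose proof (exp_ineq1 (- x) ltac:(lra)). lra.
Qed.

Lemma cosh_ge_1 (x : R) : 1 <= cosh x.
Proof.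
  destruct (Req_dec x 0) as [->|Hx]; [rewrite cosh_0; lra|].
  left; now apply cosh_gt_1.
Qed.

Lemma sinh_le_cosh (x : R) : sinh x <= cosh x.
Proof. unfold sinh, cosh. pose proof (exp_pos (- x)). lra. Qed.

Lemma is_derive_cosh (x : R) : is_derive cosh x (sinh x).
Proof. unfold cosh, sinh. auto_derive; auto. field. Qed.

Lemma sinh_ge_id (x : R) : 0 <= x -> x <= sinh x.
Proof.
  intros Hx.
  enough (0 <= sinh x - x) by lra.
  apply (is_derive_nonneg_from_0 (fun t => sinh t - t) (fun t => cosh t - 1)); auto.
  - intros t _. unfold sinh, cosh. auto_derive; auto. field.
  - intros t _. pose proof (cosh_ge_1 t). lra.
  - rewrite sinh_0; ring.
Qed.

Lemma cosh_le (x y : R) : 0 <= x -> x <= y -> cosh x <= cosh y.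
Proof.
  intros Hx Hxy. apply (is_derive_nondecreasing cosh sinh x y); try lra.
  - intros t _. apply is_derive_cosh.
  - intros t Ht. pose proof (sinh_ge_id t). lra.
Qed.

Lemma cosh_ge_taylor4 (x : R) : 0 <= x -> 1 + x*x/2 + x*x*x*x/24 <= cosh x.
Proof.
  intros Hx.
  assert (H2 : forall x, 0 <= x -> 0 <= cosh x - 1 - x*x/2).
  { apply (is_derive_nonneg_from_0 _ (fun x => sinh x - x)).
    - intros; unfold cosh, sinh; auto_derive; auto; field.
    - intros y Hy. pose proof (sinh_ge_id y Hy). lra.
    - rewrite cosh_0; field. }
  assert (H3 : forall x, 0 <= x -> 0 <= sinh x - x - x*x*x/6).
  { apply (is_derive_nonneg_from_0 _ (fun x => cosh x - 1 - x*x/2)); auto.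
    - intros; unfold cosh, sinh; auto_derive; auto; field.
    - rewrite sinh_0; field. }
  enough (0 <= cosh x - 1 - x*x/2 - x*x*x*x/24) by lra.
  apply (is_derive_nonneg_from_0 (fun x => cosh x - 1 - x*x/2 - x*x*x*x/24)
    (fun x => sinh x - x - x*x*x/6)); auto.
  - intros; unfold cosh, sinh; auto_derive; auto; field.
  - rewrite cosh_0; field.
Qed.

Lemma cosh_le_exp (x : R) : 0 <= x -> cosh x <= (exp x + 1) / 2.
Proof.
  intros Hx. unfold cosh.
  assert (exp (- x) <= 1) by (rewrite <- exp_0; apply exp_le_exp_le; lra). lra.
Qed.

Lemma sin_le_id (x : R) : 0 <= x -> sin x <= x.
Proof.
  intros Hx. destruct (Rle_lt_or_eq_dec _ _ Hx) as [H| <-].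
  - left. now apply sin_lt_x.
  - rewrite sin_0. lra.
Qed.

Lemma cos_ge_taylor2 (x : R) : 0 <= x -> 1 - x*x/2 <= cos x.
Proof.
  intros Hx. enough (0 <= cos x - 1 + x*x/2) by lra. revert x Hx.
  apply (is_derive_nonneg_from_0 _ (fun x => x - sin x)).
  - intros; auto_derive; auto; field.
  - intros y Hy. pose proof (sin_le_id y Hy). lra.
  - rewrite cos_0; field.
Qed.

Lemma sin_ge_taylor3 (x : R) : 0 <= x -> x - x*x*x/6 <= sin x.
Proof.
  intros Hx. enough (0 <= sin x - x + x*x*x/6) by lra. revert x Hx.
  apply (is_derive_nonneg_from_0 _ (fun x => cos x - 1 + x*x/2)).
  - intros; auto_derive; auto; field.
  - intros y Hy. pose proof (cos_ge_taylor2 y Hy). lra.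
  - rewrite sin_0; field.
Qed.

Lemma cos_le_taylor4 (x : R) : 0 <= x -> cos x <= 1 - x*x/2 + x*x*x*x/24.
Proof.
  intros Hx. enough (0 <= 1 - x*x/2 + x*x*x*x/24 - cos x) by lra. revert x Hx.
  apply (is_derive_nonneg_from_0 _ (fun x => sin x - x + x*x*x/6)).
  - intros; auto_derive; auto; field.
  - intros y Hy. pose proof (sin_ge_taylor3 y Hy). lra.
  - rewrite cos_0; field.
Qed.

Lemma sin_le_taylor5 (x : R) : 0 <= x -> sin x <= x - x*x*x/6 + x*x*x*x*x/120.
Proof.
  intros Hx. enough (0 <= x - x*x*x/6 + x*x*x*x*x/120 - sin x) by lra. revert x Hx.
  apply (is_derive_nonneg_from_0 _ (fun x => 1 - x*x/2 + x*x*x*x/24 - cos x)).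
  - intros; auto_derive; auto; field.
  - intros y Hy. pose proof (cos_le_taylor4 y Hy). lra.
  - rewrite sin_0; field.
Qed.

Lemma cos_ge_taylor6 (x : R) : 0 <= x ->
  1 - x*x/2 + x*x*x*x/24 - x*x*x*x*x*x/720 <= cos x.
Proof.
  intros Hx. enough (0 <= cos x - (1 - x*x/2 + x*x*x*x/24 - x*x*x*x*x*x/720)) by lra.
  revert x Hx.
  apply (is_derive_nonneg_from_0 _ (fun x => x - x*x*x/6 + x*x*x*x*x/120 - sin x)).
  - intros; auto_derive; auto; field.
  - intros y Hy. pose proof (sin_le_taylor5 y Hy). lra.
  - rewrite cos_0; field.
Qed.

Lemma taylor6_pos (a : R) : 1 <= a <= 1.45 ->
  0 < 1 - a*a/2 + a*a*a*a/24 - a*a*a*a*a*a/720.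
Proof.
  intros Ha. assert (T1 : 1 <= a*a) by nra. assert (T2 : a*a <= 2.1025) by nra.
  replace (1 - a*a/2 + a*a*a*a/24 - a*a*a*a*a*a/720)
    with (1 - (a*a)/2 + (a*a)*(a*a)/24 - (a*a)*(a*a)*(a*a)/720) by field.
  generalize dependent (a*a). intros s T1 T2. nra.
Qed.

Lemma PI2_gt_1_45 : 1.45 < PI / 2.
Proof.
  destruct (Rlt_or_le 1.45 (PI / 2)) as [H|H]; auto. exfalso.
  pose proof PI2_1. pose proof (cos_ge_taylor6 (PI / 2) ltac:(lra)) as A.
  rewrite cos_PI2 in A. pose proof (taylor6_pos (PI / 2) ltac:(lra)). lra.
Qed.

Lemma PI2_lt_1_73 : PI / 2 < 1.73.
Proof.
  destruct (Rlt_or_le (PI / 2) 1.73) as [H|H]; auto. exfalso.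
  pose proof (cos_le_taylor4 1.73 ltac:(lra)). pose proof (cos_ge_0 1.73 ltac:(lra) H). lra.
Qed.

Lemma exp_3_le : exp 3 <= 27.
Proof.
  replace 3 with (1 + 1 + 1) by ring. rewrite !exp_plus.
  pose proof exp_le_3. pose proof (exp_pos 1).
  assert (exp 1 * exp 1 <= 9) by nra. nra.
Qed.

Lemma cos_le_of_le (a x : R) : 0 <= a -> a <= x -> x <= PI -> cos x <= cos a.
Proof.
  intros Ha Hax Hx. destruct (Rle_lt_or_eq_dec _ _ Hax) as [H| <-]; [|lra].
  left. apply cos_decreasing_1; lra.
Qed.

(** * Solutions of [y^(6) = - y] *)

(* Clears numeric denominators, then decides polynomial identities modulo
   [sqrt 3 ^ 2 = 3]. *)
Ltac nsatz_sqrt3 :=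
  unfold Rdiv;
  repeat match goal with
  | |- context [/ IZR ?z] =>
      let i := fresh "i" in set (i := / IZR z);
      let Hi := fresh "Hi" in assert (Hi : IZR z * i = 1) by (unfold i; field)
  end;
  pose proof sqrt3_sq; nsatz.

Record coef := Coef { a0 : R; b0 : R; ap : R; bp : R; am : R; bm : R }.

(* [sol c] is the general real solution of [y^(6) = - y]: the roots of
   [w^6 = -1] are [+-i] and [+-sqrt 3/2 +- i/2]. *)
Definition sol (c : coef) (t : R) : R :=
  a0 c * cos t + b0 c * sin t
  + exp (sqrt 3 / 2 * t) * (ap c * cos (t / 2) + bp c * sin (t / 2))
  + exp (- (sqrt 3 / 2) * t) * (am c * cos (t / 2) + bm c * sin (t / 2)).

Definition coef_deriv (c : coef) : coef :=
  Coef (b0 c) (- a0 c)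
    (sqrt 3 / 2 * ap c + bp c / 2) (sqrt 3 / 2 * bp c - ap c / 2)
    (- (sqrt 3 / 2) * am c + bm c / 2) (- (sqrt 3 / 2) * bm c - am c / 2).

Definition coef_deriv_n (k : nat) (c : coef) : coef := Nat.iter k coef_deriv c.

Definition solk (k : nat) (c : coef) (t : R) : R := sol (coef_deriv_n k c) t.

Definition coef_scale (a : R) (c : coef) : coef :=
  Coef (a * a0 c) (a * b0 c) (a * ap c) (a * bp c) (a * am c) (a * bm c).

Definition coef0 : coef := Coef 0 0 0 0 0 0.

Lemma is_derive_sol (c : coef) (t : R) : is_derive (sol c) t (sol (coef_deriv c) t).
Proof. unfold sol, coef_deriv; simpl. auto_derive; [repeat split|]. unfold Rdiv. ring. Qed.

Lemma sol_scale (a : R) (c : coef) (t : R) : sol (coef_scale a c) t = a * sol c t.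
Proof. unfold sol, coef_scale; simpl. ring. Qed.

Lemma sol_0 (c : coef) : sol c 0 = a0 c + ap c + am c.
Proof. unfold sol. rewrite !Rmult_0_r, Rdiv_0_l, exp_0, cos_0, sin_0. ring. Qed.

Lemma coef_deriv_n_6 (c : coef) : coef_deriv_n 6 c = coef_scale (-1) c.
Proof.
  destruct c as [x0 y0 xp yp xm ym].
  unfold coef_deriv_n, Nat.iter, coef_deriv, coef_scale; cbn [nat_rect a0 b0 ap bp am bm].
  f_equal; nsatz_sqrt3.
Qed.

Lemma is_derive_solk (k : nat) (c : coef) (t : R) : is_derive (solk k c) t (solk (S k) c t).
Proof. apply is_derive_sol. Qed.

Lemma solk_6 (c : coef) (t : R) : solk 6 c t = - solk 0 c t.
Proof. unfold solk. rewrite coef_deriv_n_6, sol_scale. simpl. ring. Qed.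

(* The inverse of [c |-> (solk k c 0)_(k < 6)]. *)
Definition coef_of_data (d : nat -> R) : coef :=
  let r := sqrt 3 in
  Coef ((d 0%nat - d 2%nat + d 4%nat) / 3) ((d 1%nat - d 3%nat + d 5%nat) / 3)
    ((2 * d 0%nat + r * d 1%nat + d 2%nat - d 4%nat - r * d 5%nat) / 6)
    ((d 1%nat + r * d 2%nat + 2 * d 3%nat + r * d 4%nat + d 5%nat) / 6)
    ((2 * d 0%nat - r * d 1%nat + d 2%nat - d 4%nat + r * d 5%nat) / 6)
    ((d 1%nat - r * d 2%nat + 2 * d 3%nat - r * d 4%nat + d 5%nat) / 6).

Lemma solk_coef_of_data (d : nat -> R) (k : nat) : (k < 6)%nat ->
  solk k (coef_of_data d) 0 = d k.
Proof.
  intros Hk. unfold solk. rewrite sol_0.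
  destruct k as [|[|[|[|[|[|k]]]]]]; try lia;
    unfold coef_deriv_n, Nat.iter, coef_deriv, coef_of_data; cbn [nat_rect a0 b0 ap bp am bm];
    nsatz_sqrt3.
Qed.

Lemma coef_of_data_solk (c : coef) : coef_of_data (fun k => solk k c 0) = c.
Proof.
  destruct c as [x0 y0 xp yp xm ym]. unfold coef_of_data, solk. rewrite !sol_0.
  unfold coef_deriv_n, Nat.iter, coef_deriv; cbn [nat_rect a0 b0 ap bp am bm].
  f_equal; nsatz_sqrt3.
Qed.

(** * Positivity and uniqueness *)

Definition deriv_chain (Y : nat -> R -> R) (n : nat) : Prop :=
  forall k x, (k < n)%nat -> is_derive (Y k) x (Y (S k) x).

Lemma eigenfunction_deriv_chain (lam : R) (u : R -> R) :
  is_eigenfunction6 lam u -> deriv_chain (Derive_n u) 6.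
Proof.
  intros [Hd _] k x Hk. apply Derive_n_is_derive, Hd. lia.
Qed.

Lemma is_derive_lagrange (Y : nat -> R -> R) (x : R) : deriv_chain Y 6 ->
  is_derive (fun y => Y 5%nat y * Y 0%nat y - Y 4%nat y * Y 1%nat y + Y 3%nat y * Y 2%nat y) x
    (Y 6%nat x * Y 0%nat x + Y 3%nat x * Y 3%nat x).
Proof.
  intros HY. eapply is_derive_eq.
  - apply (is_derive_plus (fun y => Y 5%nat y * Y 0%nat y - Y 4%nat y * Y 1%nat y)).
    + apply (is_derive_minus (fun y => Y 5%nat y * Y 0%nat y)).
      * apply is_derive_mult'; apply HY; lia.
      * apply is_derive_mult'; apply HY; lia.
    + apply is_derive_mult'; apply HY; lia.
  - unfold minus, plus, opp; simpl. ring.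
Qed.

Lemma is_derive_zero_of_nondecreasing (F dF : R -> R) (a b : R) :
  (forall x, a <= x <= b -> is_derive F x (dF x)) -> (forall x, a <= x <= b -> 0 <= dF x) ->
  F a = F b -> forall x, a < x < b -> dF x = 0.
Proof.
  intros Hd Hp Hab x Hx.
  pose proof (is_derive_nondecreasing F dF a b Hd Hp) as Hmono.
  assert (Hconst : forall y, a < y < b -> F a = F y).
  { intros y Hy. pose proof (Hmono a y ltac:(lra) ltac:(lra) ltac:(lra)).
    pose proof (Hmono y b ltac:(lra) ltac:(lra) ltac:(lra)). lra. }
  assert (H0 : is_derive F x 0).
  { apply (is_derive_ext_loc (fun _ => F a)); [|apply (is_derive_const (F a))].
    apply (locally_interval _ x a b); try apply Hx. intros y Hy1 Hy2. now apply Hconst. }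
  rewrite <- (is_derive_unique _ _ _ (Hd x ltac:(lra))). now apply is_derive_unique.
Qed.

Lemma deriv_chain_zero_from_0 (n : nat) (Y : nat -> R -> R) : deriv_chain Y (S n) ->
  (forall k, (k <= n)%nat -> Y k 0 = 0) -> (forall x, 0 < x < 1 -> Y (S n) x = 0) ->
  forall x, 0 <= x <= 1 -> Y O x = 0.
Proof.
  revert Y. induction n as [|n IH]; intros Y HY H0 Hn;
    (apply (is_derive_zero_from_0 _ (Y 1%nat)); [intros x _; apply HY; lia| |apply H0; lia]).
  - exact Hn.
  - intros x Hx. apply (IH (fun k => Y (S k))); [intros k y Hk; apply HY; lia| |exact Hn|lra].
    intros k Hk. apply H0. lia.
Qed.

Lemma eigenvalue6_pos (lam : R) (u : R -> R) : is_eigenfunction6 lam u -> 0 < lam.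
Proof.
  intros He. destruct (Rlt_or_le 0 lam) as [Hl|Hl]; auto. exfalso.
  pose proof (eigenfunction_deriv_chain lam u He) as HY.
  destruct He as [_ [Hode [Hbc [x0 [Hx0 Hu0]]]]].
  set (D := Derive_n u) in *.
  assert (Hsq : forall x, 0 <= x <= 1 -> D 6%nat x * D 0%nat x + D 3%nat x * D 3%nat x
    = - lam * (u x * u x) + D 3%nat x * D 3%nat x).
  { intros x Hx. specialize (Hode x Hx). unfold D in *. simpl (Derive_n u 0).
    replace (Derive_n u 6 x) with (- (lam * u x)) by lra. ring. }
  assert (H3 : forall x, 0 < x < 1 -> D 3%nat x = 0).
  { intros x Hx.
    assert (E : D 6%nat x * D 0%nat x + D 3%nat x * D 3%nat x = 0).
    { refine (is_derive_zero_of_nondecreasing _ _ 0 1 (fun y _ => is_derive_lagrange D y HY)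
        _ _ x Hx).
      - intros y Hy. rewrite (Hsq y Hy).
        pose proof (Rle_0_sqr (u y)). pose proof (Rle_0_sqr (D 3%nat y)). unfold Rsqr in *. nra.
      - destruct (Hbc 0%nat) as [A A']; [lia|]. destruct (Hbc 1%nat) as [B B']; [lia|].
        destruct (Hbc 2%nat) as [C C']; [lia|]. rewrite A, B, C, A', B', C'. ring. }
    rewrite Hsq in E by lra.
    pose proof (Rle_0_sqr (u x)). pose proof (Rle_0_sqr (D 3%nat x)). unfold Rsqr in *. nra. }
  apply Hu0. apply (deriv_chain_zero_from_0 2 D); auto.
  - intros k y Hk. apply HY. lia.
  - intros k Hk. apply Hbc. lia.
Qed.

Lemma gronwall_zero (f df : R -> R) (K a b x0 : R) :
  (forall x, a <= x <= b -> is_derive f x (df x)) ->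
  (forall x, a <= x <= b -> 0 <= f x /\ Rabs (df x) <= K * f x) ->
  a <= x0 <= b -> f x0 = 0 -> forall x, a <= x <= b -> f x = 0.
Proof.
  intros Hd Hb Hx0 Hf0 x Hx. destruct (Hb x Hx) as [Hfx _].
  destruct (Rle_lt_dec x0 x) as [Hle|Hlt].
  - set (G := fun y => f y * exp (- K * y)).
    assert (A : G x <= G x0).
    { apply (is_derive_nonincreasing G (fun y => (df y - K * f y) * exp (- K * y)) x0 b);
        try lra.
      - intros z Hz. eapply is_derive_eq.
        + apply is_derive_mult'; [apply Hd; lra|]. auto_derive; auto.
        + cbv beta; ring.
      - intros z Hz. destruct (Hb z ltac:(lra)) as [_ B]. apply Rabs_le_between in B.
        pose proof (exp_pos (- K * z)). nra. }
    unfold G in A. rewrite Hf0 in A. pose proof (exp_pos (- K * x)). nra.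
  - set (G := fun y => f y * exp (K * y)).
    assert (A : G x <= G x0).
    { apply (is_derive_nondecreasing G (fun y => (df y + K * f y) * exp (K * y)) a x0);
        try lra.
      - intros z Hz. eapply is_derive_eq.
        + apply is_derive_mult'; [apply Hd; lra|]. auto_derive; auto.
        + cbv beta; ring.
      - intros z Hz. destruct (Hb z ltac:(lra)) as [_ B]. apply Rabs_le_between in B.
        pose proof (exp_pos (K * z)). nra. }
    unfold G in A. rewrite Hf0 in A. pose proof (exp_pos (K * x)). nra.
Qed.

Lemma energy6_deriv_bound (c y0 y1 y2 y3 y4 y5 : R) :
  Rabs (2 * (y0*y1 + y1*y2 + y2*y3 + y3*y4 + y4*y5 + y5*(c*y0)))
  <= (2 + c*c) * (y0*y0 + y1*y1 + y2*y2 + y3*y3 + y4*y4 + y5*y5).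
Proof.
  apply Rabs_le.
  (* [(2 + c^2) E -+ E'] is a sum of squares *)
  pose proof (fun z => Rle_0_sqr z) as T. unfold Rsqr in T.
  pose proof (T (y0-y1)). pose proof (T (y1-y2)). pose proof (T (y2-y3)).
  pose proof (T (y3-y4)). pose proof (T (y4-y5)). pose proof (T (c*y0-y5)).
  pose proof (T (y0+y1)). pose proof (T (y1+y2)). pose proof (T (y2+y3)).
  pose proof (T (y3+y4)). pose proof (T (y4+y5)). pose proof (T (c*y0+y5)).
  pose proof (T y0). pose proof (T (c*y1)). pose proof (T (c*y2)).
  pose proof (T (c*y3)). pose proof (T (c*y4)). pose proof (T (c*y5)).
  split; nra.
Qed.

Lemma ode6_zero_data (Y : nat -> R -> R) (c a b x0 : R) :
  deriv_chain Y 6 -> (forall x, a <= x <= b -> Y 6%nat x = c * Y 0%nat x) ->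
  a <= x0 <= b -> (forall k, (k < 6)%nat -> Y k x0 = 0) ->
  forall k x, (k < 6)%nat -> a <= x <= b -> Y k x = 0.
Proof.
  intros HY Hode Hx0 H0 k x Hk Hx.
  set (E := fun y => Y 0%nat y * Y 0%nat y + Y 1%nat y * Y 1%nat y + Y 2%nat y * Y 2%nat y
     + Y 3%nat y * Y 3%nat y + Y 4%nat y * Y 4%nat y + Y 5%nat y * Y 5%nat y).
  assert (HE : forall y, is_derive E y (2 * (Y 0%nat y * Y 1%nat y + Y 1%nat y * Y 2%nat y
     + Y 2%nat y * Y 3%nat y + Y 3%nat y * Y 4%nat y + Y 4%nat y * Y 5%nat y
     + Y 5%nat y * Y 6%nat y))).
  { intros y. unfold E. eapply is_derive_eq.
    - apply is_derive_plus'; [apply is_derive_plus'; [apply is_derive_plus';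
        [apply is_derive_plus'; [apply is_derive_plus'|]|]|]|];
        apply is_derive_mult'; apply HY; lia.
    - ring. }
  assert (HEz : E x = 0).
  { apply (gronwall_zero E _ (2 + c * c) a b x0 (fun y _ => HE y)); auto.
    - intros y Hy. split.
      + unfold E. pose proof (fun z => Rle_0_sqr z) as T. unfold Rsqr in T.
        pose proof (T (Y 0%nat y)). pose proof (T (Y 1%nat y)). pose proof (T (Y 2%nat y)).
        pose proof (T (Y 3%nat y)). pose proof (T (Y 4%nat y)). pose proof (T (Y 5%nat y)). lra.
      + rewrite (Hode y Hy). apply energy6_deriv_bound.
    - unfold E. rewrite !H0 by lia. ring. }
  unfold E in HEz.
  pose proof (fun z => Rle_0_sqr z) as T. unfold Rsqr in T.
  pose proof (T (Y 0%nat x)). pose proof (T (Y 1%nat x)). pose proof (T (Y 2%nat x)).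
  pose proof (T (Y 3%nat x)). pose proof (T (Y 4%nat x)). pose proof (T (Y 5%nat x)).
  destruct k as [|[|[|[|[|[|k]]]]]]; try lia; nra.
Qed.

(** * Boundary conditions at [-m/2] and [m/2] *)

(* Even solutions [cos t], [2 cosh(sqrt 3 t/2) cos(t/2)], [2 sinh(sqrt 3 t/2) sin(t/2)]
   and odd solutions [sin t], [2 sinh(sqrt 3 t/2) cos(t/2)], [2 cosh(sqrt 3 t/2) sin(t/2)]. *)
Definition ev1 : coef := Coef 1 0 0 0 0 0.
Definition ev2 : coef := Coef 0 0 1 0 1 0.
Definition ev3 : coef := Coef 0 0 0 1 0 (-1).
Definition od1 : coef := Coef 0 1 0 0 0 0.
Definition od2 : coef := Coef 0 0 1 0 (-1) 0.
Definition od3 : coef := Coef 0 0 0 1 0 1.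

Definition even_part (c : coef) (k : nat) (t : R) : R :=
  a0 c * solk k ev1 t + (ap c + am c) / 2 * solk k ev2 t + (bp c - bm c) / 2 * solk k ev3 t.

Definition odd_part (c : coef) (k : nat) (t : R) : R :=
  b0 c * solk k od1 t + (ap c - am c) / 2 * solk k od2 t + (bp c + bm c) / 2 * solk k od3 t.

Lemma solk_even_odd (c : coef) (k : nat) (t : R) : (k <= 2)%nat ->
  solk k c t = even_part c k t + odd_part c k t /\
  solk k c (- t) = (-1) ^ k * (even_part c k t - odd_part c k t).
Proof.
  intros Hk. unfold even_part, odd_part, solk, sol.
  replace (- t / 2) with (- (t / 2)) by field.
  replace (sqrt 3 / 2 * - t) with (- (sqrt 3 / 2) * t) by ring.
  replace (- (sqrt 3 / 2) * - t) with (sqrt 3 / 2 * t) by ring.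
  rewrite !cos_neg, !sin_neg.
  destruct c as [x0 y0 xp yp xm ym].
  destruct k as [|[|[|k]]]; try lia;
    unfold coef_deriv_n, Nat.iter, coef_deriv;
    cbn [nat_rect a0 b0 ap bp am bm ev1 ev2 ev3 od1 od2 od3];
    split; field.
Qed.

Definition det3 (a00 a01 a02 a10 a11 a12 a20 a21 a22 : R) : R :=
  a00 * (a11 * a22 - a12 * a21) - a01 * (a10 * a22 - a12 * a20) + a02 * (a10 * a21 - a11 * a20).

Lemma det3_kernel a00 a01 a02 a10 a11 a12 a20 a21 a22 x0 x1 x2 :
  x0 * a00 + x1 * a01 + x2 * a02 = 0 -> x0 * a10 + x1 * a11 + x2 * a12 = 0 ->
  x0 * a20 + x1 * a21 + x2 * a22 = 0 ->
  let d := det3 a00 a01 a02 a10 a11 a12 a20 a21 a22 in d * x0 = 0 /\ d * x1 = 0 /\ d * x2 = 0.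
Proof. intros H0 H1 H2 d. unfold d, det3. repeat split; nsatz. Qed.

Lemma det3_cofactor a00 a01 a02 a10 a11 a12 a20 a21 a22 :
  let c0 := a01 * a12 - a02 * a11 in
  let c1 := a02 * a10 - a00 * a12 in
  let c2 := a00 * a11 - a01 * a10 in
  c0 * a00 + c1 * a01 + c2 * a02 = 0 /\ c0 * a10 + c1 * a11 + c2 * a12 = 0 /\
  c0 * a20 + c1 * a21 + c2 * a22 = det3 a00 a01 a02 a10 a11 a12 a20 a21 a22.
Proof. intros. unfold c0, c1, c2, det3. repeat split; ring. Qed.

Definition det_even (t : R) : R :=
  det3 (solk 0 ev1 t) (solk 0 ev2 t) (solk 0 ev3 t) (solk 1 ev1 t) (solk 1 ev2 t) (solk 1 ev3 t)
    (solk 2 ev1 t) (solk 2 ev2 t) (solk 2 ev3 t).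

Definition det_odd (t : R) : R :=
  det3 (solk 0 od1 t) (solk 0 od2 t) (solk 0 od3 t) (solk 1 od1 t) (solk 1 od2 t) (solk 1 od3 t)
    (solk 2 od1 t) (solk 2 od2 t) (solk 2 od3 t).

Lemma half_angle_atoms (t : R) :
  cos t = cos (t/2) * cos (t/2) - sin (t/2) * sin (t/2) /\ sin t = 2 * sin (t/2) * cos (t/2) /\
  sin (t/2) * sin (t/2) + cos (t/2) * cos (t/2) = 1 /\
  exp (sqrt 3 / 2 * t) * exp (- (sqrt 3 / 2) * t) = 1 /\
  cosh (sqrt 3 * t) = (exp (sqrt 3 / 2 * t) * exp (sqrt 3 / 2 * t)
                      + exp (- (sqrt 3 / 2) * t) * exp (- (sqrt 3 / 2) * t)) / 2 /\
  sinh (sqrt 3 * t) = (exp (sqrt 3 / 2 * t) * exp (sqrt 3 / 2 * t)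
                      - exp (- (sqrt 3 / 2) * t) * exp (- (sqrt 3 / 2) * t)) / 2.
Proof.
  pose proof (cos_2a (t / 2)) as C2. pose proof (sin_2a (t / 2)) as S2.
  replace (2 * (t / 2)) with t in C2, S2 by field. rewrite C2, S2.
  unfold cosh, sinh. rewrite <- !exp_plus.
  repeat split; try ring.
  - pose proof (sin2_cos2 (t / 2)) as H. unfold Rsqr in H. lra.
  - replace (sqrt 3 / 2 * t + - (sqrt 3 / 2) * t) with 0 by ring. apply exp_0.
  - replace (sqrt 3 / 2 * t + sqrt 3 / 2 * t) with (sqrt 3 * t) by field.
    replace (- (sqrt 3 / 2) * t + - (sqrt 3 / 2) * t) with (- (sqrt 3 * t)) by field.
    reflexivity.
  - replace (sqrt 3 / 2 * t + sqrt 3 / 2 * t) with (sqrt 3 * t) by field.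
    replace (- (sqrt 3 / 2) * t + - (sqrt 3 / 2) * t) with (- (sqrt 3 * t)) by field.
    reflexivity.
Qed.

Ltac solve_det_value t :=
  destruct (half_angle_atoms t) as (R1 & R2 & R3 & R4 & R5 & R6);
  unfold det_even, det_odd, det3, solk, sol;
  unfold coef_deriv_n, Nat.iter, coef_deriv;
  cbn [nat_rect a0 b0 ap bp am bm ev1 ev2 ev3 od1 od2 od3];
  rewrite ?R1, ?R2, ?R5, ?R6; revert R3 R4;
  generalize (cos (t/2)) (sin (t/2)) (exp (sqrt 3 / 2 * t)) (exp (- (sqrt 3 / 2) * t));
  intros; nsatz_sqrt3.

Lemma det_even_value (t : R) :
  det_even t = sqrt 3 * sin t * (cosh (sqrt 3 * t) - cos t).
Proof. solve_det_value t. Qed.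

Lemma det_odd_value (t : R) :
  det_odd t = - sqrt 3 * (cos t * cos t + cosh (sqrt 3 * t) * cos t - 2).
Proof. solve_det_value t. Qed.

Lemma cofactor_even_value (t : R) :
  solk 0 ev2 t * solk 1 ev3 t - solk 0 ev3 t * solk 1 ev2 t = sqrt 3 * sin t + sinh (sqrt 3 * t).
Proof. solve_det_value t. Qed.

Lemma cofactor_odd_value (t : R) :
  solk 0 od2 t * solk 1 od3 t - solk 0 od3 t * solk 1 od2 t = sinh (sqrt 3 * t) - sqrt 3 * sin t.
Proof. solve_det_value t. Qed.

Definition secular (m : R) : R :=
  cos (m / 2) * cos (m / 2) + cosh (sqrt 3 * m / 2) * cos (m / 2) - 2.

(* The boundary conditions at [x = 0, 1] in the variable [t = m (x - 1/2)]. *)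
Definition bc_half (m : R) (c : coef) : Prop :=
  forall k, (k <= 2)%nat -> solk k c (m / 2) = 0 /\ solk k c (- (m / 2)) = 0.

Definition even_coef (x y z : R) : coef := Coef x 0 y z y (- z).
Definition odd_coef (x y z : R) : coef := Coef 0 x y z (- y) z.

Lemma bc_half_even_odd (m : R) (c : coef) : bc_half m c ->
  forall k, (k <= 2)%nat -> even_part c k (m / 2) = 0 /\ odd_part c k (m / 2) = 0.
Proof.
  intros Hbc k Hk. destruct (Hbc k Hk) as [A B].
  destruct (solk_even_odd c k (m / 2) Hk) as [A' B'].
  rewrite A' in A. rewrite B' in B.
  assert (Hs : (-1) ^ k <> 0) by (apply pow_nonzero; lra).
  apply Rmult_integral in B as [B|B]; [contradiction|]. lra.
Qed.

Lemma bc_half_even_coef (m x y z : R) :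
  (forall k, (k <= 2)%nat ->
    x * solk k ev1 (m / 2) + y * solk k ev2 (m / 2) + z * solk k ev3 (m / 2) = 0) ->
  bc_half m (even_coef x y z).
Proof.
  intros H k Hk. destruct (solk_even_odd (even_coef x y z) k (m / 2) Hk) as [A B].
  assert (Ee : even_part (even_coef x y z) k (m / 2) = 0).
  { rewrite <- (H k Hk). unfold even_part; simpl. field. }
  assert (Eo : odd_part (even_coef x y z) k (m / 2) = 0) by (unfold odd_part; simpl; field).
  rewrite A, B, Ee, Eo. split; ring.
Qed.

Lemma bc_half_odd_coef (m x y z : R) :
  (forall k, (k <= 2)%nat ->
    x * solk k od1 (m / 2) + y * solk k od2 (m / 2) + z * solk k od3 (m / 2) = 0) ->
  bc_half m (odd_coef x y z).
Proof.
  intros H k Hk. destruct (solk_even_odd (odd_coef x y z) k (m / 2) Hk) as [A B].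
  assert (Eo : odd_part (odd_coef x y z) k (m / 2) = 0).
  { rewrite <- (H k Hk). unfold odd_part; simpl. field. }
  assert (Ee : even_part (odd_coef x y z) k (m / 2) = 0) by (unfold even_part; simpl; field).
  rewrite A, B, Ee, Eo. split; ring.
Qed.

Lemma det_even_neq0 (m : R) : 0 < m -> sin (m / 2) <> 0 -> det_even (m / 2) <> 0.
Proof.
  intros Hm Hs. rewrite det_even_value.
  pose proof sqrt3_pos. pose proof (COS_bound (m / 2)).
  assert (1 < cosh (sqrt 3 * (m / 2))) by (apply cosh_gt_1; nra).
  intros E. apply Rmult_integral in E as [E|E]; [apply Rmult_integral in E as [E|E]|]; lra.
Qed.

Lemma det_odd_secular (m : R) : det_odd (m / 2) = - sqrt 3 * secular m.
Proof.
  rewrite det_odd_value. unfold secular.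
  replace (sqrt 3 * (m / 2)) with (sqrt 3 * m / 2) by field. reflexivity.
Qed.

Lemma bc_half_trivial (m : R) (c : coef) : 0 < m -> bc_half m c ->
  sin (m / 2) <> 0 -> secular m <> 0 -> c = coef0.
Proof.
  intros Hm Hbc Hs Hg.
  destruct (bc_half_even_odd m c Hbc 0%nat) as [E0 O0]; [lia|].
  destruct (bc_half_even_odd m c Hbc 1%nat) as [E1 O1]; [lia|].
  destruct (bc_half_even_odd m c Hbc 2%nat) as [E2 O2]; [lia|].
  destruct (det3_kernel _ _ _ _ _ _ _ _ _ _ _ _ E0 E1 E2) as (A0 & A1 & A2).
  destruct (det3_kernel _ _ _ _ _ _ _ _ _ _ _ _ O0 O1 O2) as (B0 & B1 & B2).
  fold (det_even (m / 2)) in A0, A1, A2. fold (det_odd (m / 2)) in B0, B1, B2.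
  pose proof (det_even_neq0 m Hm Hs) as Hde.
  assert (Hdo : det_odd (m / 2) <> 0).
  { rewrite det_odd_secular. pose proof sqrt3_pos.
    intros E. apply Rmult_integral in E as [E|E]; lra. }
  apply Rmult_integral in A0, A1, A2, B0, B1, B2.
  destruct c as [x0 y0 xp yp xm ym]; simpl in *. unfold coef0.
  destruct A0, A1, A2, B0, B1, B2; try contradiction.
  f_equal; lra.
Qed.

Lemma bc_half_even_nontrivial (m : R) : 0 < m -> sin (m / 2) = 0 ->
  exists c, bc_half m c /\ c <> coef0.
Proof.
  intros Hm Hs.
  destruct (det3_cofactor (solk 0 ev1 (m/2)) (solk 0 ev2 (m/2)) (solk 0 ev3 (m/2))
    (solk 1 ev1 (m/2)) (solk 1 ev2 (m/2)) (solk 1 ev3 (m/2))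
    (solk 2 ev1 (m/2)) (solk 2 ev2 (m/2)) (solk 2 ev3 (m/2))) as (K0 & K1 & K2).
  fold (det_even (m / 2)) in K2. rewrite det_even_value, Hs in K2.
  eexists. split.
  - apply bc_half_even_coef. intros k Hk.
    destruct k as [|[|[|k]]]; try lia; [rewrite <- K0|rewrite <- K1|rewrite K2]; ring.
  - intros E. injection E as E. revert E. rewrite cofactor_even_value, Hs.
    pose proof sqrt3_pos. pose proof (sinh_ge_id (sqrt 3 * (m / 2))). nra.
Qed.

Lemma bc_half_odd_nontrivial (m : R) : 0 < m -> secular m = 0 ->
  exists c, bc_half m c /\ c <> coef0.
Proof.
  intros Hm Hg.
  destruct (det3_cofactor (solk 0 od1 (m/2)) (solk 0 od2 (m/2)) (solk 0 od3 (m/2))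
    (solk 1 od1 (m/2)) (solk 1 od2 (m/2)) (solk 1 od3 (m/2))
    (solk 2 od1 (m/2)) (solk 2 od2 (m/2)) (solk 2 od3 (m/2))) as (K0 & K1 & K2).
  fold (det_odd (m / 2)) in K2. rewrite det_odd_secular, Hg in K2.
  eexists. split.
  - apply bc_half_odd_coef. intros k Hk.
    destruct k as [|[|[|k]]]; try lia; [rewrite <- K0|rewrite <- K1|rewrite K2]; ring.
  - intros E. injection E as E. revert E. rewrite cofactor_odd_value.
    pose proof sqrt3_pos. pose proof (sinh_ge_id (sqrt 3 * (m / 2))).
    pose proof (sin_lt_x (m / 2)). nra.
Qed.

Definition eigfun (m : R) (c : coef) (x : R) : R := sol c (m * (x - 1 / 2)).

Lemma Derive_n_eigfun (m : R) (c : coef) (k : nat) (x : R) :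
  Derive_n (eigfun m c) k x = m ^ k * solk k c (m * (x - 1 / 2)) /\ ex_derive_n (eigfun m c) k x.
Proof.
  apply (Derive_n_family _ (fun k x => m ^ k * solk k c (m * (x - 1 / 2)))).
  - intros y. unfold eigfun, solk. simpl. ring.
  - intros j y. unfold solk, sol. simpl coef_deriv_n. auto_derive; [repeat split|].
    simpl; unfold coef_deriv; cbn [a0 b0 ap bp am bm]. unfold Rminus, Rdiv. ring.
Qed.

Lemma Derive_n_eigfun_ends (m : R) (c : coef) (k : nat) :
  Derive_n (eigfun m c) k 0 = m ^ k * solk k c (- (m / 2)) /\
  Derive_n (eigfun m c) k 1 = m ^ k * solk k c (m / 2).
Proof.
  rewrite (proj1 (Derive_n_eigfun m c k 0)), (proj1 (Derive_n_eigfun m c k 1)).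
  replace (m * (0 - 1 / 2)) with (- (m / 2)) by field.
  replace (m * (1 - 1 / 2)) with (m / 2) by field. now split.
Qed.

Lemma eigfun_bc_iff (m : R) (c : coef) : m <> 0 -> (bc_half m c <->
  forall k, (k <= 2)%nat -> Derive_n (eigfun m c) k 0 = 0 /\ Derive_n (eigfun m c) k 1 = 0).
Proof.
  intros Hm. split; intros H k Hk; destruct (H k Hk) as [A B];
    destruct (Derive_n_eigfun_ends m c k) as [E0 E1].
  - rewrite E0, E1, A, B. split; ring.
  - pose proof (pow_nonzero m k Hm).
    rewrite E0 in A. rewrite E1 in B.
    apply Rmult_integral in A as [A|A]; [contradiction|].
    apply Rmult_integral in B as [B|B]; [contradiction|]. now split.
Qed.

Lemma eigfun_vanishing (m : R) (c : coef) : m <> 0 ->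
  (forall x, 0 < x < 1 -> eigfun m c x = 0) -> c = coef0.
Proof.
  intros Hm Hz.
  assert (Hd : forall k, solk k c 0 = 0).
  { intros k. pose proof (Derive_n_locally_zero _ (1 / 2) 0 1 k ltac:(lra) Hz) as E.
    rewrite (proj1 (Derive_n_eigfun m c k (1 / 2))) in E.
    replace (m * (1 / 2 - 1 / 2)) with 0 in E by ring.
    apply Rmult_integral in E as [E|E]; auto.
    exfalso. exact (pow_nonzero m k Hm E). }
  rewrite <- (coef_of_data_solk c). unfold coef_of_data. rewrite !Hd.
  unfold coef0. f_equal; field.
Qed.

Lemma eigfun_eigenfunction (m : R) (c : coef) : 0 < m -> bc_half m c -> c <> coef0 ->
  is_eigenfunction6 (m ^ 6) (eigfun m c).
Proof.
  intros Hm Hbc Hc. split; [|split; [|split]].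
  - intros k x _. apply Derive_n_eigfun.
  - intros x _. rewrite (proj1 (Derive_n_eigfun m c 6 x)), solk_6.
    unfold eigfun, solk. simpl. ring.
  - apply eigfun_bc_iff; [lra|exact Hbc].
  - apply NNPP. intros Hz. apply Hc, (eigfun_vanishing m c); [lra|].
    intros y Hy. apply NNPP. intros Hy'. apply Hz. exists y. split; [lra|exact Hy'].
Qed.

Lemma pos_sixth_root (lam : R) : 0 < lam -> exists m, 0 < m /\ lam = m ^ 6.
Proof.
  intros Hl. exists (Rpower lam (/ 6)). split; [apply exp_pos|].
  rewrite <- Rpower_pow by apply exp_pos. rewrite Rpower_mult.
  replace (/ 6 * INR 6) with 1 by (simpl; field). now rewrite Rpower_1.
Qed.

(* [u] minus the solution with the same data at [1/2] vanishes by [ode6_zero_data]. *)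
Lemma eigenfunction_eigfun (lam : R) (u : R -> R) : is_eigenfunction6 lam u ->
  exists m c, 0 < m /\ lam = m ^ 6 /\ bc_half m c /\ c <> coef0.
Proof.
  intros He. pose proof (eigenvalue6_pos lam u He) as Hl.
  destruct (pos_sixth_root lam Hl) as [m [Hm Hlm]].
  pose proof (eigenfunction_deriv_chain lam u He) as HD.
  destruct He as [_ [Hode [Hbc [x0 [Hx0 Hu0]]]]].
  set (c := coef_of_data (fun k => Derive_n u k (1 / 2) / m ^ k)).
  set (Y := fun k x => Derive_n u k x - Derive_n (eigfun m c) k x).
  assert (HY : deriv_chain Y 6).
  { intros k x Hk. apply (is_derive_minus (Derive_n u k)); [now apply HD|].
    apply Derive_n_is_derive, Derive_n_eigfun. }
  assert (HY6 : forall x, 0 <= x <= 1 -> Y 6%nat x = - lam * Y 0%nat x).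
  { intros x Hx. unfold Y. specialize (Hode x Hx).
    rewrite !(proj1 (Derive_n_eigfun m c _ x)), solk_6.
    unfold solk in *. simpl in *. rewrite Hlm in *. lra. }
  assert (HY0 : forall k, (k < 6)%nat -> Y k (1 / 2) = 0).
  { intros k Hk. unfold Y. rewrite (proj1 (Derive_n_eigfun m c k (1 / 2))).
    replace (m * (1 / 2 - 1 / 2)) with 0 by ring. unfold c.
    rewrite solk_coef_of_data by exact Hk. field. apply pow_nonzero. lra. }
  pose proof (ode6_zero_data Y (- lam) 0 1 (1 / 2) HY HY6 ltac:(lra) HY0) as HYz.
  exists m, c. split; [exact Hm|split; [exact Hlm|split]].
  - apply eigfun_bc_iff; [lra|]. intros k Hk. destruct (Hbc k Hk) as [A B].
    pose proof (HYz k 0 ltac:(lia) ltac:(lra)). pose proof (HYz k 1 ltac:(lia) ltac:(lra)).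
    unfold Y in *. lra.
  - intros Ec. apply Hu0. pose proof (HYz 0%nat x0 ltac:(lia) Hx0) as A.
    unfold Y in A. simpl in A. rewrite Ec in A. unfold eigfun, sol in A. simpl in A. lra.
Qed.

Lemma is_eigenvalue6_iff (lam : R) : is_eigenvalue6 lam <->
  exists m, 0 < m /\ lam = m ^ 6 /\ (sin (m / 2) = 0 \/ secular m = 0).
Proof.
  split.
  - intros [u Hu]. destruct (eigenfunction_eigfun lam u Hu) as (m & c & Hm & Hl & Hbc & Hc).
    exists m. repeat split; auto.
    destruct (Req_dec (sin (m / 2)) 0) as [Hs|Hs]; [now left|right].
    apply NNPP. intros Hg. exact (Hc (bc_half_trivial m c Hm Hbc Hs Hg)).
  - intros (m & Hm & -> & Hroot).
    destruct Hroot as [Hs|Hg];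
      [destruct (bc_half_even_nontrivial m Hm Hs) as (c & Hbc & Hc)
      |destruct (bc_half_odd_nontrivial m Hm Hg) as (c & Hbc & Hc)];
      exists (eigfun m c); now apply eigfun_eigenfunction.
Qed.

(** * Roots of the secular function *)

Definition phi : coef := coef_of_data (fun k => match k with O => 1 | _ => 0 end).

Lemma solk_phi_0 (k : nat) : (0 < k < 6)%nat -> solk k phi 0 = 0.
Proof.
  intros Hk. unfold phi. rewrite solk_coef_of_data by lia.
  destruct k; [lia|reflexivity].
Qed.

Lemma sol_phi (y : R) :
  sol phi y = (2 * cos (y/2) * cos (y/2) - 1 + 2 * cos (y/2) * cosh (sqrt 3 * (y/2))) / 3.
Proof.
  unfold phi, coef_of_data, sol, cosh; cbn [a0 b0 ap bp am bm].
  replace y with (2 * (y/2)) at 1 by field. rewrite cos_2a_cos.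
  replace (- (sqrt 3 * (y / 2))) with (- (sqrt 3 / 2) * y) by field.
  replace (sqrt 3 * (y / 2)) with (sqrt 3 / 2 * y) by field. field.
Qed.

Lemma secular_sol_phi (y : R) : secular y = 3 / 2 * (sol phi y - 1).
Proof.
  rewrite sol_phi. unfold secular.
  replace (sqrt 3 * y / 2) with (sqrt 3 * (y / 2)) by field. field.
Qed.

Lemma sol_phi_pos (y : R) : 0 < y <= 2.9 -> 0 < sol phi y.
Proof.
  intros Hy. rewrite sol_phi. set (t := y / 2).
  assert (Ht : 0 < t <= 1.45) by (unfold t; lra).
  pose proof PI2_gt_1_45. pose proof sqrt3_bounds. pose proof sqrt3_pos.
  assert (0 <= cos t) by (apply cos_ge_0; lra).
  pose proof (cosh_ge_1 (sqrt 3 * t)).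
  pose proof (cos_ge_taylor6 1.45 ltac:(lra)).
  pose proof (cos_le_of_le t 1.45 ltac:(lra) ltac:(lra) ltac:(lra)).
  (* below [t = 1.18] the [cos] terms suffice; above, [cosh] is bounded below at a breakpoint *)
  destruct (Rle_lt_dec t 1.18) as [T1|T1].
  - pose proof (cos_ge_taylor6 1.18 ltac:(lra)).
    pose proof (cos_le_of_le t 1.18 ltac:(lra) ltac:(lra) ltac:(lra)).
    assert (0.38 <= cos t) by lra. nra.
  - assert (Hch : forall a, 0 <= a <= t ->
      1 + 3 * (a*a) / 2 + 9 * (a*a) * (a*a) / 24 <= cosh (sqrt 3 * t)).
    { intros a Ha. pose proof (cosh_le (sqrt 3 * a) (sqrt 3 * t) ltac:(nra) ltac:(nra)).
      pose proof (cosh_ge_taylor4 (sqrt 3 * a) ltac:(nra)) as HL.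
      pose proof sqrt3_sq as S.
      replace (sqrt 3 * a * (sqrt 3 * a) * (sqrt 3 * a) * (sqrt 3 * a))
        with (9 * (a * a) * (a * a)) in HL by nsatz.
      replace (sqrt 3 * a * (sqrt 3 * a)) with (3 * (a * a)) in HL by nsatz.
      lra. }
    destruct (Rle_lt_dec t 1.35) as [T2|T2].
    + pose proof (cos_ge_taylor6 1.35 ltac:(lra)).
      pose proof (cos_le_of_le t 1.35 ltac:(lra) ltac:(lra) ltac:(lra)).
      assert (0.2187 <= cos t) by lra.
      pose proof (Hch 1.18 ltac:(lra)). assert (3.8 <= cosh (sqrt 3 * t)) by lra. nra.
    + assert (0.1194 <= cos t) by lra.
      pose proof (Hch 1.35 ltac:(lra)). assert (4.97 <= cosh (sqrt 3 * t)) by lra. nra.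
Qed.

(* [1 - phi] and [- phi^(k)], [k = 1..5], vanish at [0] and each is an antiderivative of
   the next one, the last being [phi^(6) = - phi > 0]. *)
Lemma sol_phi_lt_1 (y : R) : 0 < y <= 2.9 -> sol phi y < 1.
Proof.
  intros Hy.
  assert (Hdown : forall k, (0 < k < 6)%nat ->
    (forall x, 0 < x <= 2.9 -> 0 < - solk (S k) phi x) ->
    forall x, 0 < x <= 2.9 -> 0 < - solk k phi x).
  { intros k Hk HS. apply (is_derive_pos_from_0 _ (fun x => - solk (S k) phi x)); auto.
    - intros x. apply (is_derive_opp (solk k phi)), is_derive_solk.
    - rewrite solk_phi_0 by lia. ring. }
  assert (H6 : forall x, 0 < x <= 2.9 -> 0 < - solk 6 phi x).
  { intros x Hx. rewrite solk_6. unfold solk. simpl. pose proof (sol_phi_pos x Hx). lra. }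
  assert (H1 : forall x, 0 < x <= 2.9 -> 0 < - solk 1 phi x).
  { do 5 (apply Hdown; [lia|]). exact H6. }
  enough (0 < 1 - solk 0 phi y) by (unfold solk in *; simpl in *; lra).
  refine (is_derive_pos_from_0 (fun x => 1 - solk 0 phi x) (fun x => - solk 1 phi x) 2.9
    _ _ H1 y Hy).
  - intros x. eapply is_derive_eq.
    + apply (is_derive_minus (fun _ => 1) (solk 0 phi));
        [apply is_derive_const|apply is_derive_solk].
    + unfold minus, plus, opp, zero; simpl. ring.
  - unfold phi. rewrite solk_coef_of_data by lia. ring.
Qed.

Lemma secular_neg_of_cos_nonpos (y : R) : cos (y / 2) <= 0 -> secular y < 0.
Proof.
  intros Hc. unfold secular. pose proof (COS_bound (y / 2)).
  pose proof (cosh_ge_1 (sqrt 3 * y / 2)). nra.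
Qed.

Lemma secular_neg_lt_PI (y : R) : 0 < y < PI -> secular y < 0.
Proof.
  intros Hy. destruct (Rle_lt_dec y 2.9) as [H|H].
  - rewrite secular_sol_phi. pose proof (sol_phi_lt_1 y ltac:(lra)). lra.
  - unfold secular. set (t := y / 2).
    pose proof PI2_gt_1_45. pose proof PI2_lt_1_73. pose proof sqrt3_bounds. pose proof sqrt3_pos.
    assert (Ht : 1.45 < t < PI / 2) by (unfold t; lra).
    assert (0 <= cos t) by (apply cos_ge_0; lra).
    pose proof (cos_le_taylor4 1.45 ltac:(lra)).
    pose proof (cos_le_of_le 1.45 t ltac:(lra) ltac:(lra) ltac:(lra)).
    assert (cos t <= 0.133) by lra.
    replace (sqrt 3 * y / 2) with (sqrt 3 * t) by (unfold t; field).
    pose proof (cosh_le_exp (sqrt 3 * t) ltac:(nra)).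
    pose proof (exp_le_exp_le (sqrt 3 * t) 3 ltac:(nra)). pose proof exp_3_le.
    pose proof (cosh_ge_1 (sqrt 3 * t)). nra.
Qed.

Lemma continuity_secular : continuity secular.
Proof.
  intros x. apply derivable_continuous_pt. eexists. apply is_derive_Reals.
  unfold secular, cosh. auto_derive; auto.
Qed.

Lemma IVT_strict (f : R -> R) (a b : R) : continuity f -> a < b -> f a < 0 -> 0 < f b ->
  {z | a < z < b /\ f z = 0}.
Proof.
  intros Hf Hab Ha Hb. destruct (IVT f a b Hf Hab Ha Hb) as [z [[H1 H2] Hz]].
  exists z. split; auto.
  split; [destruct (Rle_lt_or_eq_dec _ _ H1) as [|<-]|destruct (Rle_lt_or_eq_dec _ _ H2) as [| ->]];
    auto; lra.
Qed.

Lemma cos_sub_2kPI (x : R) (k : nat) : cos (x - 2 * INR k * PI) = cos x.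
Proof. rewrite <- (cos_period _ k). f_equal. ring. Qed.

Lemma secular_4i3 (i : nat) : secular ((4 * INR i + 3) * PI) = -2.
Proof.
  unfold secular. replace ((4 * INR i + 3) * PI / 2) with (3 * (PI / 2) + 2 * INR i * PI) by field.
  rewrite cos_period, cos_3PI2. ring.
Qed.

Lemma secular_4i5 (i : nat) : secular ((4 * INR i + 5) * PI) = -2.
Proof.
  unfold secular. replace ((4 * INR i + 5) * PI / 2) with (PI / 2 + 2 * INR (S i) * PI)
    by (rewrite S_INR; field).
  rewrite cos_period, cos_PI2. ring.
Qed.

Lemma secular_4i4 (i : nat) : 0 < secular ((4 * INR i + 4) * PI).
Proof.
  unfold secular. replace ((4 * INR i + 4) * PI / 2) with (0 + 2 * INR (S i) * PI)
    by (rewrite S_INR; field).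
  rewrite cos_period, cos_0. pose proof (pos_INR i). pose proof PI_RGT_0. pose proof sqrt3_pos.
  enough (1 < cosh (sqrt 3 * ((4 * INR i + 4) * PI) / 2)) by lra.
  apply cosh_gt_1. apply Rgt_not_eq, Rdiv_lt_0_compat; [|lra].
  apply Rmult_lt_0_compat; [lra|]. nra.
Qed.

Definition secular_root_rise (i : nat) :
  {z | (4 * INR i + 3) * PI < z < (4 * INR i + 4) * PI /\ secular z = 0}.
Proof.
  apply IVT_strict; [apply continuity_secular| |rewrite secular_4i3; lra|apply secular_4i4].
  pose proof PI_RGT_0. lra.
Defined.

Definition secular_root_fall (i : nat) :
  {z | (4 * INR i + 4) * PI < z < (4 * INR i + 5) * PI /\ secular z = 0}.
Proof.
  destruct (IVT_strict (fun y => - secular y) ((4 * INR i + 4) * PI) ((4 * INR i + 5) * PI))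
    as [z [Hz E]].
  - apply continuity_opp, continuity_secular.
  - pose proof PI_RGT_0. lra.
  - pose proof (secular_4i4 i). lra.
  - rewrite secular_4i5. lra.
  - exists z. split; [exact Hz|lra].
Defined.

Lemma secular_increasing_rise (i : nat) (y1 y2 : R) :
  (4 * INR i + 3) * PI <= y1 -> y1 < y2 -> y2 <= (4 * INR i + 4) * PI -> secular y1 < secular y2.
Proof.
  intros H1 H12 H2. pose proof PI_RGT_0. pose proof (pos_INR i). pose proof sqrt3_pos.
  set (s1 := y1 / 2 - 2 * INR i * PI). set (s2 := y2 / 2 - 2 * INR i * PI).
  assert (3 * (PI / 2) <= s1 < s2 /\ s2 <= 2 * PI) by (unfold s1, s2; lra).
  assert (cos s1 < cos s2) by (apply cos_increasing_1; lra).
  assert (0 <= cos s1).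
  { rewrite <- (cos_sub_2kPI s1 1). apply cos_ge_0; rewrite INR_1; lra. }
  assert (0 <= y1) by nra.
  pose proof (cosh_le (sqrt 3 * y1 / 2) (sqrt 3 * y2 / 2) ltac:(nra) ltac:(nra)).
  pose proof (cosh_ge_1 (sqrt 3 * y1 / 2)).
  unfold secular. rewrite <- (cos_sub_2kPI (y1 / 2) i), <- (cos_sub_2kPI (y2 / 2) i).
  fold s1 s2. nra.
Qed.

Lemma cos_pos_of_secular_root (y : R) : secular y = 0 -> 0 < cos (y / 2).
Proof.
  intros H. destruct (Rlt_or_le 0 (cos (y / 2))) as [A|A]; auto.
  pose proof (secular_neg_of_cos_nonpos y A). lra.
Qed.

Lemma cos_drop (t1 t2 : R) : 0 <= t1 < t2 -> t2 <= PI / 2 -> cos t1 <= 1 / 8 ->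
  (t2 - t1) / 2 <= cos t1 - cos t2.
Proof.
  intros Ht Ht2 Hc. pose proof PI_RGT_0.
  destruct (mvt_is_derive cos (fun t => - sin t) t1 t2) as [xi [Hxi E]]; [lra| |].
  { intros x _. apply is_derive_cos. }
  assert (0 <= sin xi) by (apply sin_ge_0; lra).
  assert (cos xi <= cos t1) by (apply cos_le_of_le; lra).
  assert (0 <= cos xi) by (apply cos_ge_0; lra).
  pose proof (sin2_cos2 xi). unfold Rsqr in *.
  assert (1 / 2 <= sin xi) by nra. nra.
Qed.

Lemma cosh_diff_le (a y1 y2 : R) : 0 <= a -> 0 <= y1 <= y2 ->
  cosh (a * y2) - cosh (a * y1) <= a * cosh (a * y2) * (y2 - y1).
Proof.
  intros Ha Hy. destruct (Rle_lt_or_eq_dec _ _ (proj2 Hy)) as [Hlt| <-]; [|nra].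
  destruct (mvt_is_derive (fun y => cosh (a * y)) (fun y => a * sinh (a * y)) y1 y2 Hlt)
    as [xi [Hxi E]].
  { intros x _. unfold cosh, sinh. auto_derive; auto. field. }
  rewrite E. pose proof (sinh_le_cosh (a * xi)). pose proof (sinh_ge_id (a * xi) ltac:(nra)).
  pose proof (cosh_le (a * xi) (a * y2) ltac:(nra) ltac:(nra)).
  apply Rmult_le_compat_r; [lra|]. apply Rmult_le_compat_l; lra.
Qed.

Lemma cos_half_le_of_secular_root (y : R) : 11.6 <= y -> secular y = 0 -> cos (y / 2) <= 1 / 8.
Proof.
  intros Hy G. pose proof (cos_pos_of_secular_root y G). pose proof sqrt3_bounds.
  assert (16 <= cosh (sqrt 3 * y / 2)).
  { pose proof (cosh_ge_taylor4 (sqrt 3 * y / 2) ltac:(nra)).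
    assert (10 <= sqrt 3 * y / 2) by nra.
    assert (0 <= (sqrt 3 * y / 2) * (sqrt 3 * y / 2)) by nra. nra. }
  pose proof (COS_bound (y / 2)). unfold secular in G. nra.
Qed.

(* Between two roots [cos(y/2)] drops at rate at least [1/4] while the [cosh] term grows at
   relative rate less than [1], and [cos(y/2) <= 1/8] at a root, so [secular] strictly
   decreases from one root to the other. *)
Lemma secular_root_unique_fall (i : nat) (y1 y2 : R) :
  (4 * INR i + 4) * PI <= y1 <= (4 * INR i + 5) * PI ->
  (4 * INR i + 4) * PI <= y2 <= (4 * INR i + 5) * PI ->
  secular y1 = 0 -> secular y2 = 0 -> y1 = y2.
Proof.
  revert y1 y2.
  enough (H : forall y1 y2, (4 * INR i + 4) * PI <= y1 -> y1 < y2 -> y2 <= (4 * INR i + 5) * PI ->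
    secular y1 = 0 -> secular y2 = 0 -> False).
  { intros y1 y2 H1 H2 G1 G2. destruct (Rtotal_order y1 y2) as [L|[L|L]]; auto;
      exfalso; [apply (H y1 y2)|apply (H y2 y1)]; auto; lra. }
  intros y1 y2 H1 H12 H2 G1 G2.
  pose proof PI2_gt_1_45. pose proof (pos_INR i). pose proof sqrt3_bounds.
  assert (0 <= y1) by nra.
  set (s1 := y1 / 2 - 2 * INR (S i) * PI). set (s2 := y2 / 2 - 2 * INR (S i) * PI).
  assert (Hs : 0 <= s1 < s2 /\ s2 <= PI / 2) by (unfold s1, s2; rewrite S_INR; lra).
  assert (Ec1 : cos (y1 / 2) = cos s1) by (unfold s1; now rewrite cos_sub_2kPI).
  assert (Ec2 : cos (y2 / 2) = cos s2) by (unfold s2; now rewrite cos_sub_2kPI).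
  pose proof (cos_half_le_of_secular_root y1 ltac:(nra) G1) as Hc1. rewrite Ec1 in Hc1.
  pose proof (cos_drop s1 s2 ltac:(lra) ltac:(lra) Hc1) as Hdrop.
  replace (s2 - s1) with ((y2 - y1) / 2) in Hdrop by (unfold s1, s2; field).
  pose proof (cosh_diff_le (sqrt 3 / 2) y1 y2 ltac:(lra) ltac:(nra)) as Hgrow.
  replace (sqrt 3 / 2 * y1) with (sqrt 3 * y1 / 2) in Hgrow by field.
  replace (sqrt 3 / 2 * y2) with (sqrt 3 * y2 / 2) in Hgrow by field.
  assert (0 <= cos s2) by (apply cos_ge_0; lra).
  pose proof (cos_pos_of_secular_root y1 G1). rewrite Ec1 in *.
  pose proof (cosh_ge_1 (sqrt 3 * y2 / 2)).
  unfold secular in G1, G2. rewrite Ec1 in G1. rewrite Ec2 in G2.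
  set (C1 := cosh (sqrt 3 * y1 / 2)) in *. set (C2 := cosh (sqrt 3 * y2 / 2)) in *.
  assert (E : (cos s2 * cos s2 + C2 * cos s2 - 2) - (cos s1 * cos s1 + C1 * cos s1 - 2)
    = (cos s2 - cos s1) * (cos s1 + cos s2 + C2) + cos s1 * (C2 - C1)) by ring.
  assert ((cos s2 - cos s1) * (cos s1 + cos s2 + C2) <= - (y2 - y1) / 4 * C2) by nra.
  assert (C1 <= C2) by (unfold C1, C2; apply cosh_le; nra).
  assert (cos s1 * (C2 - C1) <= 1 / 8 * (C2 - C1)) by nra.
  assert (C2 - C1 <= C2 * (y2 - y1)) by nra.
  nra.
Qed.

Lemma secular_root_unique_rise (i : nat) (y1 y2 : R) :
  (4 * INR i + 3) * PI <= y1 <= (4 * INR i + 4) * PI ->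
  (4 * INR i + 3) * PI <= y2 <= (4 * INR i + 4) * PI ->
  secular y1 = 0 -> secular y2 = 0 -> y1 = y2.
Proof.
  intros A B C D. destruct (Rtotal_order y1 y2) as [H|[H|H]]; auto.
  - pose proof (secular_increasing_rise i y1 y2 ltac:(lra) H ltac:(lra)). lra.
  - pose proof (secular_increasing_rise i y2 y1 ltac:(lra) H ltac:(lra)). lra.
Qed.

Lemma cos_pos_reduce (x : R) : 0 <= x -> 0 < cos x ->
  exists j : nat, - (PI / 2) < x - 2 * INR j * PI < PI / 2.
Proof.
  intros Hx Hc. pose proof PI_RGT_0.
  set (r := (x + PI) / (2 * PI)).
  assert (Hr : x + PI = r * (2 * PI)) by (unfold r; field; lra).
  assert (Hr0 : 0 < r) by (unfold r; apply Rdiv_lt_0_compat; lra).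
  destruct (archimed r) as [A1 A2].
  assert (Hz : (0 <= up r - 1)%Z).
  { assert (Hup : 0 < IZR (up r)) by lra. apply lt_IZR in Hup. lia. }
  exists (Z.to_nat (up r - 1)).
  rewrite INR_IZR_INZ, Z2Nat.id, minus_IZR by exact Hz.
  set (t := x - 2 * (IZR (up r) - 1) * PI).
  assert (Ht : - PI <= t < PI) by (unfold t; nra).
  assert (Ect : cos t = cos x).
  { unfold t. rewrite <- (cos_period _ (Z.to_nat (up r - 1))).
    rewrite INR_IZR_INZ, Z2Nat.id, minus_IZR by exact Hz. f_equal. ring. }
  rewrite <- Ect in Hc. split.
  - destruct (Rlt_or_le (- (PI / 2)) t) as [B|B]; auto.
    assert (Hneg : cos (- t) <= 0) by (apply cos_le_0; lra). rewrite cos_neg in Hneg. lra.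
  - destruct (Rlt_or_le t (PI / 2)) as [B|B]; auto.
    assert (cos t <= 0) by (apply cos_le_0; lra). lra.
Qed.

Lemma secular_root_location (y : R) : 0 < y -> secular y = 0 -> exists i : nat,
  (4 * INR i + 3) * PI <= y <= (4 * INR i + 4) * PI \/
  (4 * INR i + 4) * PI <= y <= (4 * INR i + 5) * PI.
Proof.
  intros Hy G. pose proof PI_RGT_0.
  assert (Hpi : PI <= y).
  { destruct (Rlt_or_le y PI) as [A|A]; auto. pose proof (secular_neg_lt_PI y ltac:(lra)). lra. }
  destruct (cos_pos_reduce (y / 2) ltac:(lra) (cos_pos_of_secular_root y G)) as [[|i] Hj].
  - simpl in Hj. lra.
  - exists i. rewrite S_INR in Hj.
    destruct (Rle_lt_dec y ((4 * INR i + 4) * PI)); [left|right]; split; nra.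
Qed.

(* With [c = cos(mu/2)], [H = cosh(sqrt 3 mu/2)] and [cosh(sqrt 3 mu) = 2 H^2 - 1], the
   equation [odd_eq] is [(c - H) (c^2 + H c - 2) = 0], and [c < H]. *)
Lemma odd_eq_factor (c H C : R) : C = 2 * H * H - 1 -> 1 < H -> c <= 1 ->
  (c = 4 * H / C + / C * (c * (2 * c * c - 1) - 4 * c) <-> c * c + H * c - 2 = 0).
Proof.
  intros HC HH Hc. assert (HCp : 0 < C) by nra.
  assert (E : c = 4 * H / C + / C * (c * (2 * c * c - 1) - 4 * c) <->
              (c - H) * (c * c + H * c - 2) = 0).
  { rewrite HC. split; intros E.
    - apply (Rmult_eq_compat_r (2 * H * H - 1)) in E. field_simplify in E; [|lra]. nra.
    - apply (Rmult_eq_reg_r (2 * H * H - 1)); [|lra]. field_simplify; [|lra]. nra. }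
  rewrite E. split; intros F; [|rewrite F; ring].
  apply Rmult_integral in F as [F|F]; [lra|exact F].
Qed.

Lemma odd_eq_iff_secular (x : R) : 0 < x -> (odd_eq x <-> secular x = 0).
Proof.
  intros Hx. unfold odd_eq, secular. pose proof sqrt3_pos.
  assert (E2 : cosh (x * sqrt 3) = 2 * cosh (sqrt 3 * x / 2) * cosh (sqrt 3 * x / 2) - 1).
  { unfold cosh. replace (x * sqrt 3) with (sqrt 3 * x / 2 + sqrt 3 * x / 2) by field.
    replace (- (sqrt 3 * x / 2 + sqrt 3 * x / 2)) with (- (sqrt 3 * x / 2) + - (sqrt 3 * x / 2))
      by field.
    rewrite !exp_plus.
    assert (exp (sqrt 3 * x / 2) * exp (- (sqrt 3 * x / 2)) = 1)
      by (rewrite <- exp_plus, Rplus_opp_r; apply exp_0).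
    field_simplify. nra. }
  assert (E3 : cos x = 2 * cos (x / 2) * cos (x / 2) - 1).
  { replace x with (2 * (x / 2)) at 1 by field. apply cos_2a_cos. }
  replace (x * sqrt 3 / 2) with (sqrt 3 * x / 2) by field.
  rewrite E3. apply odd_eq_factor; auto.
  - apply cosh_gt_1. nra.
  - apply COS_bound.
Qed.

Definition secular_root (k : nat) : R :=
  if Nat.even k then proj1_sig (secular_root_rise (Nat.div2 k))
  else proj1_sig (secular_root_fall (Nat.div2 k)).

Lemma secular_root_spec (k : nat) :
  INR (2 * k + 2) * PI < secular_root k < INR (2 * k + 4) * PI /\ secular (secular_root k) = 0.
Proof.
  pose proof PI_RGT_0. unfold secular_root.
  destruct (Nat.Even_or_Odd k) as [[i ->]|[i ->]].
  - rewrite Nat.even_even, Nat.div2_double.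
    destruct (secular_root_rise i) as [z [[A B] C]]. cbn [proj1_sig].
    replace (INR (2 * (2 * i) + 2)) with (4 * INR i + 2)
      by (repeat rewrite ?plus_INR, ?mult_INR, ?S_INR; simpl; ring).
    replace (INR (2 * (2 * i) + 4)) with (4 * INR i + 4)
      by (repeat rewrite ?plus_INR, ?mult_INR, ?S_INR; simpl; ring).
    split; auto. split; nra.
  - rewrite Nat.even_odd.
    replace (2 * i + 1)%nat with (S (2 * i)) by lia. rewrite Nat.div2_succ_double.
    destruct (secular_root_fall i) as [z [[A B] C]]. cbn [proj1_sig].
    replace (INR (2 * S (2 * i) + 2)) with (4 * INR i + 4)
      by (repeat rewrite ?plus_INR, ?mult_INR, ?S_INR; simpl; ring).
    replace (INR (2 * S (2 * i) + 4)) with (4 * INR i + 6)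
      by (repeat rewrite ?plus_INR, ?mult_INR, ?S_INR; simpl; ring).
    split; auto. split; nra.
Qed.

Lemma secular_root_complete (y : R) : 0 < y -> secular y = 0 -> exists k, y = secular_root k.
Proof.
  intros Hy G. unfold secular_root.
  destruct (secular_root_location y Hy G) as [i [H|H]].
  - exists (2 * i)%nat. rewrite Nat.even_even, Nat.div2_double.
    destruct (secular_root_rise i) as [z [[A B] C]]. cbn [proj1_sig].
    apply (secular_root_unique_rise i); auto; lra.
  - exists (2 * i + 1)%nat.
    rewrite Nat.even_odd.
    replace (2 * i + 1)%nat with (S (2 * i)) by lia. rewrite Nat.div2_succ_double.
    destruct (secular_root_fall i) as [z [[A B] C]]. cbn [proj1_sig].
    apply (secular_root_unique_fall i); auto; lra.
Qed.

(* Only [n >= 2] matters; [n - 3] is truncated. *)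
Definition mu (n : nat) : R :=
  if Nat.even n then INR n * PI else secular_root (Nat.div2 (n - 3)).

Lemma mu_even (j : nat) : mu (2 * j) = INR (2 * j) * PI.
Proof. unfold mu. now rewrite Nat.even_even. Qed.

Lemma mu_odd (k : nat) : mu (2 * k + 3) = secular_root k.
Proof.
  unfold mu. replace (2 * k + 3)%nat with (2 * (k + 1) + 1)%nat by lia.
  rewrite Nat.even_odd. f_equal.
  replace (2 * (k + 1) + 1 - 3)%nat with (2 * k)%nat by lia. apply Nat.div2_double.
Qed.

Lemma secular_root_pos (k : nat) : 0 < secular_root k.
Proof.
  destruct (secular_root_spec k) as [[A _] _].
  pose proof PI_RGT_0. assert (0 < INR (2 * k + 2)) by (apply lt_0_INR; lia). nra.
Qed.

Lemma secular_root_increasing (k : nat) : secular_root k < secular_root (S k).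
Proof.
  destruct (secular_root_spec k) as [[_ A] _]. destruct (secular_root_spec (S k)) as [[B _] _].
  replace (2 * S k + 2)%nat with (2 * k + 4)%nat in B by lia. lra.
Qed.

Lemma mu_increasing (n : nat) : (2 <= n)%nat -> mu n < mu (S n).
Proof.
  intros Hn. destruct (Nat.Even_or_Odd n) as [[j ->]|[j ->]].
  - rewrite mu_even. replace (S (2 * j)) with (2 * (j - 1) + 3)%nat by lia. rewrite mu_odd.
    destruct (secular_root_spec (j - 1)) as [[A _] _].
    replace (2 * (j - 1) + 2)%nat with (2 * j)%nat in A by lia. lra.
  - replace (2 * j + 1)%nat with (2 * (j - 1) + 3)%nat by lia. rewrite mu_odd.
    replace (S (2 * (j - 1) + 3)) with (2 * (j + 1))%nat by lia. rewrite mu_even.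
    destruct (secular_root_spec (j - 1)) as [[_ A] _].
    replace (2 * (j - 1) + 4)%nat with (2 * (j + 1))%nat in A by lia. lra.
Qed.

Lemma sin_half_eq_0_pos (m : R) : 0 < m -> sin (m / 2) = 0 ->
  exists j : nat, (1 <= j)%nat /\ m = INR (2 * j) * PI.
Proof.
  intros Hm Hs. pose proof PI_RGT_0. destruct (sin_eq_0_0 _ Hs) as [k Hk].
  assert (Hk0 : (0 < k)%Z).
  { apply lt_IZR. destruct (Rlt_or_le 0 (IZR k)) as [A|A]; auto. nra. }
  exists (Z.to_nat k). split; [lia|].
  rewrite mult_INR, (INR_IZR_INZ (Z.to_nat k)), Z2Nat.id by lia. simpl (INR 2). lra.
Qed.

Lemma is_eigenvalue6_iff_mu (lam : R) :
  is_eigenvalue6 lam <-> exists n : nat, (2 <= n)%nat /\ lam = mu n ^ 6.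
Proof.
  pose proof PI_RGT_0. rewrite is_eigenvalue6_iff. split.
  - intros (m & Hm & -> & [Hs|Hg]).
    + destruct (sin_half_eq_0_pos m Hm Hs) as [j [Hj ->]].
      exists (2 * j)%nat. split; [lia|]. now rewrite mu_even.
    + destruct (secular_root_complete m Hm Hg) as [k ->].
      exists (2 * k + 3)%nat. split; [lia|]. now rewrite mu_odd.
  - intros (n & Hn & ->). exists (mu n).
    destruct (Nat.Even_or_Odd n) as [[j ->]|[j ->]].
    + rewrite mu_even. assert (0 < INR (2 * j)) by (apply lt_0_INR; lia).
      repeat split; [nra|left].
      apply sin_eq_0_1. exists (Z.of_nat j). rewrite <- INR_IZR_INZ, mult_INR. simpl. field.
    + replace (2 * j + 1)%nat with (2 * (j - 1) + 3)%nat by lia. rewrite mu_odd.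
      repeat split; [apply secular_root_pos|right; apply secular_root_spec].
Qed.

Theorem theorem2p2 :
  exists mu : nat -> R,
    (forall n : nat, (2 <= n)%nat -> Nat.Even n -> mu n = INR n * PI) /\
    (forall k : nat, 0 < mu (2 * k + 3)%nat) /\
    (forall k : nat, mu (2 * k + 3)%nat < mu (2 * k + 5)%nat) /\
    (forall x : R, 0 < x -> (odd_eq x <-> exists k : nat, x = mu (2 * k + 3)%nat)) /\
    (forall n : nat, (2 <= n)%nat -> mu n < mu (S n)) /\
    (forall lam : R, is_eigenvalue6 lam <->
       exists n : nat, (2 <= n)%nat /\ lam = (mu n) ^ 6).
Proof.
  exists mu. split; [|split; [|split; [|split; [|split]]]].
  - intros n _ [j ->]. apply mu_even.
  - intros k. rewrite mu_odd. apply secular_root_pos.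
  - intros k. replace (2 * k + 5)%nat with (2 * S k + 3)%nat by lia.
    rewrite !mu_odd. apply secular_root_increasing.
  - intros x Hx. rewrite odd_eq_iff_secular by exact Hx. split.
    + intros Hroot. destruct (secular_root_complete x Hx Hroot) as [k ->].
      exists k. now rewrite mu_odd.
    + intros [k ->]. rewrite mu_odd. apply secular_root_spec.
  - exact mu_increasing.
  - exact is_eigenvalue6_iff_mu.
Qed.
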